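(* Let $n\ge 2$ and let $\mu$ be a weight of the irreducible highest weight module $V(\Lambda_n)$ of the simple Lie algebra of type $C_n$. Suppose that every element $v\in B(\Lambda_n)$ with $\mathrm{wt}(v)=\mu$ has exactly $m<n$ single entries. Then $n-m=2k$ is even and $$\dim V(\Lambda_n)_\mu=\frac{1}{k+1}\binom{2k}{k}.$$
   Context: Let $\epsilon_1,\dots,\epsilon_n$ be the standard orthonormal basis of the dual of the Cartan subalgebra of $C_n$, with simple roots $\alpha_i=\epsilon_i-\epsilon_{i+1}$ ($1\le i\le n-1$), $\alpha_n=2\epsilon_n$, and fundamental weights $\Lambda_1,\dots,\Lambda_n$. Let $S=\{1,\dots,n,\bar n,\dots,\bar 1\}$ with total order $1\prec 2\prec\cdots\prec n\prec\bar n\prec\cdots\prec\bar 1$. The crystal $B(\Lambda_n)$ (Kashiwara–Nakashima) is the set of $n$-tuples $(i_1,\dots,i_n)$ of elements of $S$ with $i_1\prec i_2\prec\cdots\prec i_n$ such that whenever $i_k=p$ and $i_l=\bar p$ one has $k+(n-l+1)\le p$. Set $\mathrm{wt}(i)=\epsilon_i$, $\mathrm{wt}(\bar i)=-\epsilon_i$ and $\mathrm{wt}(i_1,\dots,i_n)=\sum_j\mathrm{wt}(i_j)$; then $\dim V(\Lambda_n)_\mu$ equals the number of elements of $B(\Lambda_n)$ of weight $\mu$. For $v=(i_1,\dots,i_n)\in B(\Lambda_n)$, an entry $i_k=p$ (resp. $i_k=\bar p$) is called a pair if $\bar p$ (resp. $p$) also occurs among the entries of $v$, and a single otherwise. *)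

From mathcomp Require Import all_boot all_order all_algebra.
Set Implicit Arguments. Unset Strict Implicit. Unset Printing Implicit Defensive.

(* Encoding of the alphabet S = {1 < ... < n < bar n < ... < bar 1} of type C_n
   by positions t : 'I_(2n):  t < n  encodes the unbarred letter t+1,
   n <= t < 2n encodes the barred letter  bar (2n - t).
   The order of S is the order of positions.  The letter "bar" of the
   position t is the position 2n-1-t. *)

Definition letter_label (n : nat) (t : 'I_(n.*2)) : nat :=
  if (t < n)%N then t.+1 else (n.*2 - t)%N.

Definition unbarred (n : nat) (t : 'I_(n.*2)) : bool := (t < n)%N.

Definition conj_pos (n : nat) (t : nat) : nat := (n.*2.-1 - t)%N.

(* The Kashiwara--Nakashima crystal B(Lambda_n): n-tuples strictly increasing
   (i_1 < ... < i_n) such that whenever i_k = p and i_l = bar p one has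
   k + (n - l + 1) <= p  (k, l are 1-based; here k.+1, l.+1). *)
Definition B_Lambda (n : nat) : {set n.-tuple 'I_(n.*2)} :=
  [set v : n.-tuple 'I_(n.*2) |
     sorted ltn [seq val x | x <- v] &&
     [forall k : 'I_n, forall l : 'I_n,
        (unbarred (tnth v k) &&
           (val (tnth v l) == conj_pos n (tnth v k))) ==>
        (k.+1 + (n - l.+1).+1 <= letter_label (tnth v k))%N]].

Definition wt (n : nat) (v : n.-tuple 'I_(n.*2)) : {ffun 'I_n -> int} :=
  [ffun i : 'I_n =>
     (Posz (count (fun t : 'I_(n.*2) => val t == val i) v) -
      Posz (count (fun t : 'I_(n.*2) => val t == conj_pos n i) v))%R].

Definition singles (n : nat) (v : n.-tuple 'I_(n.*2)) : nat :=
  count (fun t : 'I_(n.*2) => conj_pos n t \notin [seq val x | x <- v]) v.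

(* dim V(Lambda_n)_mu, computed as the number of crystal elements of weight mu *)
Definition wt_mult (n : nat) (mu : {ffun 'I_n -> int}) : nat :=
  #|[set v in B_Lambda n | wt v == mu]|.

From mathcomp Require Import all_boot all_order all_algebra zify.
Set Implicit Arguments. Unset Strict Implicit. Unset Printing Implicit Defensive.

(* Record an element v of B(Lambda_n) by its column word: the j-th letter counts
   how many of j and bar j occur in v (0, 1 or 2).  Fixing the weight fixes the
   m single columns (letter 1, oriented as in the weight) and leaves every other
   column empty or full, and v is recovered from the weight and the column word.
   Since v has n entries the letters sum to n, and the Kashiwara-Nakashima
   condition at a pair j, bar j says that the letters before j sum to less than
   j - 1.  Reading 0, 1, 2 as an up, flat and down step, the admissible column
   words are therefore the Motzkin paths from height 0 to 0 with prescribed flat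
   steps, i.e. the Dyck paths of length n - m = 2k.  By the reflection principle
   there are binom(2k, k) - binom(2k, k + 1) = binom(2k, k) / (k + 1) of them. *)

(* [dyck_paths m d] counts the paths of m steps +1 or -1 from height d to height
   0 that never go below 0. *)
Fixpoint dyck_paths (m d : nat) : nat :=
  if m is m'.+1 then dyck_paths m' d.+1 + (if d is d'.+1 then dyck_paths m' d' else 0)
  else d == 0.

Lemma dyck_paths_small m d : m < d -> dyck_paths m d = 0.
Proof. by elim: m d => [|m IHm] [|d] //= ltmd; rewrite !IHm //; lia. Qed.

Lemma dyck_paths_reflection d q :
  dyck_paths (d + q.*2) d + 'C(d + q.*2, d + q.+1) = 'C(d + q.*2, q).
Proof.
move def_m: (d + q.*2) => m; elim: m d q def_m => [|m IHm] d q def_m.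
  by case: d q def_m => [|d] [|q].
case: q def_m => [|q] def_m.
  rewrite addn0 in def_m; rewrite def_m /= (@dyck_paths_small m) // bin_small; last lia.
  by have := IHm m 0 (addn0 m); rewrite !bin0 bin_small; lia.
have IH1 := IHm d.+1 q ltac:(lia).
case: d def_m IH1 => [|d] def_m IH1;
  rewrite [dyck_paths m.+1 _]/= !(add0n, addSn, addnS) !binS in IH1 *.
  lia.
have := IHm d q.+1 ltac:(lia); rewrite !addnS; lia.
Qed.

Lemma dyck_paths_catalan k : dyck_paths k.*2 0 * k.+1 = 'C(k.*2, k).
Proof.
have := dyck_paths_reflection 0 k; rewrite !add0n => reflection.
have := mul_bin_left k.*2 k; have -> : k.*2 - k = k by lia.
nia.
Qed.

Fixpoint motzkin_path (d : nat) (w : seq nat) : bool :=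
  if w is y :: w' then
    match y with
    | 0 => motzkin_path d.+1 w'
    | 1 => motzkin_path d w'
    | 2 => (0 < d) && motzkin_path d.-1 w'
    | _ => false
    end
  else d == 0.

Lemma prefix_bound_cons d d' y w : d' + y = d.+1 -> (y == 2) ==> (0 < d) ->
  (forall x, x < size w -> nth 0 w x = 2 -> sumn (take x w) < d' + x) <->
  (forall x, x < (size w).+1 -> nth 0 (y :: w) x = 2 ->
     sumn (take x (y :: w)) < d + x).
Proof.
move=> def_d' pos_d; split=> bound.
  case=> [|x] /= ltx nth_x; first by rewrite addn0; apply: (implyP pos_d); rewrite nth_x.
  by have := bound x ltx nth_x; lia.
by move=> x ltx nth_x; have /= := bound x.+1 ltx nth_x; lia.
Qed.

Lemma motzkin_pathP d w :
  reflect [/\ all (fun y => y <= 2) w,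
              forall x, x < size w -> nth 0 w x = 2 -> sumn (take x w) < d + x
            & sumn w = d + size w]
          (motzkin_path d w).
Proof.
elim: w d => [|y w IHw] d /=; first by apply: (iffP eqP) => [->|[]]; rewrite ?addn0.
case: y => [|[|[|y]]] /=; last by constructor => -[].
- have [to_cons of_cons] := @prefix_bound_cons d d.+1 0 w (addn0 _) isT.
  by apply: (iffP (IHw d.+1)) => -[all_w bound sum_w]; split; auto; lia.
- have [to_cons of_cons] := @prefix_bound_cons d d 1 w (addn1 _) isT.
  by apply: (iffP (IHw d)) => -[all_w bound sum_w]; split; auto; lia.
case: d => [|d] /=; first by constructor => -[_ /(_ 0 erefl erefl)].
have [to_cons of_cons] := @prefix_bound_cons d.+1 d 2 w (addn2 _) isT.
by apply: (iffP (IHw d)) => -[all_w bound sum_w]; split; auto; lia.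
Qed.

Definition fits (b : bool) (y : nat) : bool :=
  if b then y == 1 else (y == 0) || (y == 2).

Fixpoint fillings (p : seq bool) : seq (seq nat) :=
  if p is b :: p' then
    if b then map (cons 1) (fillings p')
    else map (cons 0) (fillings p') ++ map (cons 2) (fillings p')
  else [:: [::]].

Lemma mem_fillings p w : (w \in fillings p) = all2 fits p w.
Proof.
elim: p w => [|b p IHp] [|y w] //=.
  by case: b; rewrite ?mem_cat; apply/negP; [case/mapP | case/orP; case/mapP].
case: b; rewrite [fits _ y]/fits; last rewrite mem_cat.
  apply/mapP/andP => [[w' + [-> ->]]|[/eqP -> fits_w]]; first by rewrite IHp.
  by exists w; rewrite ?IHp.
apply/orP/andP => [[]/mapP[w' + [-> ->]]|[/orP[]/eqP -> fits_w]]; rewrite ?IHp //;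
  [left | right]; apply/mapP; exists w; rewrite ?IHp //.
Qed.

Lemma uniq_fillings p : uniq (fillings p).
Proof.
have cons_inj y : injective (cons y : seq nat -> seq nat) by move=> w w' [].
elim: p => [|[] p IHp] //=; rewrite ?cat_uniq !map_inj_uniq // IHp andbT /=.
by apply/hasPn => _ /mapP[w _ ->]; apply/mapP => -[].
Qed.

Lemma nth_fillings p w : w \in fillings p ->
  size w = size p /\ forall j, j < size p -> fits (nth false p j) (nth 0 w j).
Proof.
rewrite mem_fillings.
elim: p w => [|b p IHp] [|y w] //= /andP[fits_y /IHp[size_w fits_w]].
by split=> [|[|j]] //=; [rewrite size_w | apply: fits_w].
Qed.

Lemma mem_fillings_self w : all (fun c => c <= 2) w -> w \in fillings [seq c == 1 | c <- w].
Proof.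
rewrite mem_fillings; elim: w => //= c w IHw /andP[le_c2 /IHw ->].
by rewrite andbT /fits; case: c le_c2 => [|[|[|]]].
Qed.

Lemma count_motzkin_fillings p d :
  count (motzkin_path d) (fillings p) = dyck_paths (count negb p) d.
Proof.
elim: p d => [|[] p IHp] d /=; first by case: d.
  by rewrite count_map -IHp.
rewrite count_cat !count_map add0n -IHp; congr (_ + _).
case: d => [|d] /=; last by rewrite -IHp.
by rewrite (eq_count (a2 := pred0)) ?count_pred0.
Qed.

Lemma sumn_le2 w : all (fun c => c <= 2) w ->
  sumn w = count (pred1 1) w + (count (pred1 2) w).*2.
Proof.
by elim: w => //= c w IHw /andP[le_c2 /IHw ->]; case: c le_c2 => [|[|[|]]] //= _; lia.
Qed.

Definition column n (s : seq nat) (j : nat) : nat := (j \in s) + (conj_pos n j \in s).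

Definition columns n (s : seq nat) : seq nat := map (column n s) (iota 0 n).

Lemma size_columns n s : size (columns n s) = n.
Proof. by rewrite size_map size_iota. Qed.

Lemma nth_columns n s j : j < n -> nth 0 (columns n s) j = column n s j.
Proof. by move=> lt_jn; rewrite (nth_map 0) ?size_iota // nth_iota. Qed.

Lemma columns_le2 n s : all (fun c => c <= 2) (columns n s).
Proof.
by apply/allP => _ /mapP[j _ ->]; rewrite /column; case: (j \in s); case: (_ \in s).
Qed.

Lemma conj_posK n t : t < n.*2 -> conj_pos n (conj_pos n t) = t.
Proof. by rewrite /conj_pos; lia. Qed.

Lemma sumn_map_column n s l :
  sumn (map (column n s) l)
  = count (fun j => j \in s) l + count (fun j => conj_pos n j \in s) l.
Proof. by elim: l => //= j l ->; rewrite addnACA. Qed.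

Lemma count_predU_disjoint (T : eqType) (a b : pred T) (l : seq T) :
  {in l, forall t, ~~ (a t && b t)} -> count (predU a b) l = count a l + count b l.
Proof.
move=> disj_ab; rewrite -count_predUI (@eq_in_count _ (predI a b) pred0).
  by rewrite count_pred0 addn0.
by move=> t /disj_ab /negbTE.
Qed.

Lemma count_uniq_iota (P : pred nat) s N : uniq s -> all (fun t => t < N) s ->
  count P s = count (fun t => P t && (t \in s)) (iota 0 N).
Proof.
move=> uniq_s lt_s; rewrite -!size_filter; apply/perm_size/uniq_perm.
- exact: filter_uniq.
- exact/filter_uniq/iota_uniq.
move=> t; rewrite !mem_filter mem_iota; case s_t: (t \in s); rewrite ?andbF //=.
by rewrite (allP lt_s _ s_t) !andbT.
Qed.

Lemma count_iota_conj n (P : pred nat) :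
  count P (iota n n) = count (fun j => P (conj_pos n j)) (iota 0 n).
Proof.
have -> : iota n n = map (conj_pos n) (rev (iota 0 n)).
  apply: (@eq_from_nth _ 0); first by rewrite size_map size_rev !size_iota.
  rewrite size_iota => i lt_i; rewrite (nth_map 0) ?size_rev ?size_iota //.
  by rewrite nth_rev ?size_iota // !nth_iota /conj_pos; lia.
by rewrite count_map count_rev.
Qed.

Lemma count_halves n (P : pred nat) s : uniq s -> all (fun t => t < n.*2) s ->
  count P s = count (fun j => P j && (j \in s)) (iota 0 n)
            + count (fun j => P (conj_pos n j) && (conj_pos n j \in s)) (iota 0 n).
Proof.
move=> uniq_s lt_s; rewrite (count_uniq_iota _ uniq_s lt_s) -addnn iotaD count_cat.
by rewrite count_iota_conj.
Qed.

Lemma sumn_columns n s : uniq s -> all (fun t => t < n.*2) s -> sumn (columns n s) = size s.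
Proof.
by move=> uniq_s lt_s; rewrite sumn_map_column -count_predT (count_halves _ uniq_s lt_s).
Qed.

Lemma sumn_take_columns n s x : uniq s -> all (fun t => t < n.*2) s -> x <= n ->
  sumn (take x (columns n s))
  = count (fun t => t < x) s + count (fun t => conj_pos n x < t) s.
Proof.
move=> uniq_s lt_s le_xn.
rewrite -count_predU_disjoint; last by move=> t _; apply/andP => -[]; rewrite /conj_pos; lia.
rewrite (count_halves _ uniq_s lt_s) /columns -map_take take_iota sumn_map_column.
have -> : minn x n = x by lia.
rewrite -(filter_iota_ltn 0 le_xn) !count_filter; congr (_ + _); apply: eq_in_count => j;
  rewrite mem_iota /= /conj_pos [LHS]andbC => lt_jn; congr (_ && _); apply/idP/idP; lia.
Qed.

Lemma singles_columns n s : uniq s -> all (fun t => t < n.*2) s ->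
  count (fun t => conj_pos n t \notin s) s = count (pred1 1) (columns n s).
Proof.
move=> uniq_s lt_s; rewrite (count_halves _ uniq_s lt_s) count_map -count_predU_disjoint.
  apply: eq_in_count => j; rewrite mem_iota /= /column => lt_jn.
  by rewrite conj_posK; last lia; case: (j \in s); case: (conj_pos n j \in s).
move=> j; rewrite mem_iota /= => lt_jn.
by rewrite conj_posK; last lia; case: (j \in s); case: (conj_pos n j \in s).
Qed.

(* Empty and full columns are equinumerous, since the columns sum to n. *)
Lemma count_nonsingle_columns n s :
  uniq s -> all (fun t => t < n.*2) s -> size s = n ->
  count (predC (pred1 1)) (columns n s) = (count (pred1 2) (columns n s)).*2.
Proof.
move=> uniq_s lt_s size_s; have := count_predC (pred1 1) (columns n s).
have := sumn_columns uniq_s lt_s; rewrite (sumn_le2 (columns_le2 n s)) size_s size_columns.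
lia.
Qed.

Lemma index_sorted_ltn s x : sorted ltn s -> x \in s -> index x s = count (fun t => t < x) s.
Proof.
elim: s => [|y s IHs] //= sorted_ys; have gt_y := order_path_min ltn_trans sorted_ys.
rewrite inE; case: (eqVneq y x) => [<- _ | _ /= s_x].
  rewrite ltnn; apply/esym/eqP; rewrite -leqn0 leqNgt -has_count.
  by apply/hasPn => t /(allP gt_y) /ltnW; rewrite leqNgt.
by rewrite (allP gt_y x s_x) IHs //; apply: path_sorted sorted_ys.
Qed.

Lemma count_gt_index s c : sorted ltn s -> c \in s ->
  count (fun t => c < t) s = size s - (index c s).+1.
Proof.
move=> sorted_s s_c; rewrite index_sorted_ltn //.
have split_s :
    count (fun t => t < c) s + count (pred1 c) s + count (fun t => c < t) s = size s.
  by elim: s {sorted_s s_c} => //= y s <-; case: ltngtP; lia.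
have uniq_s : uniq s := sorted_uniq ltn_trans ltnn sorted_s.
by move: split_s; rewrite count_uniq_mem // s_c; lia.
Qed.

Lemma all_val_lt n N (v : n.-tuple 'I_N) : all (fun t => t < N) (map val v).
Proof. by apply/allP => _ /mapP[t _ ->]; apply: ltn_ord. Qed.

Lemma tnth_val n N (v : n.-tuple 'I_N) (k : 'I_n) : val (tnth v k) = nth 0 (map val v) k.
Proof. by rewrite (tnth_nth (tnth v k)) (nth_map (tnth v k)) // size_tuple. Qed.

Lemma tuple_of_filter_iota n N (P : pred nat) : count P (iota 0 N) = n ->
  exists v : n.-tuple 'I_N, map val v = filter P (iota 0 N).
Proof.
set e := [seq i <- enum 'I_N | P (val i)] => count_P.
have size_e : size e == n by rewrite size_filter -(count_map val) val_enum_ord count_P.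
by exists (Tuple size_e); rewrite /= -val_enum_ord filter_map.
Qed.

Lemma sorted_B_Lambda n (v : n.-tuple 'I_(n.*2)) :
  v \in B_Lambda n -> sorted ltn (map val v).
Proof. by rewrite inE => /andP[]. Qed.

Lemma uniq_B_Lambda n (v : n.-tuple 'I_(n.*2)) : v \in B_Lambda n -> uniq (map val v).
Proof. by move/sorted_B_Lambda; apply: sorted_uniq; [apply: ltn_trans | apply: ltnn]. Qed.

Lemma B_LambdaP n (v : n.-tuple 'I_(n.*2)) : sorted ltn (map val v) ->
  reflect (forall x, x < n -> x \in map val v -> conj_pos n x \in map val v ->
             sumn (take x (columns n (map val v))) < x)
          (v \in B_Lambda n).
Proof.
set s := map val v => sorted_s.
have size_s : size s = n by rewrite size_map size_tuple.
have uniq_s : uniq s := sorted_uniq ltn_trans ltnn sorted_s.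
have lt_s : all (fun t => t < n.*2) s := all_val_lt v.
have pair_bound x : x < n -> x \in s -> conj_pos n x \in s ->
    sumn (take x (columns n s)) = index x s + (n - (index (conj_pos n x) s).+1).
  move=> lt_xn s_x s_cx; rewrite sumn_take_columns ?(ltnW lt_xn) //.
  by rewrite index_sorted_ltn // count_gt_index // size_s.
rewrite inE sorted_s /=; apply: (iffP forallP) => [KN x lt_xn s_x s_cx | KN k].
  have lt_k : index x s < n by rewrite -size_s index_mem.
  have lt_l : index (conj_pos n x) s < n by rewrite -[X in _ < X]size_s index_mem.
  have := forallP (KN (Ordinal lt_k)) (Ordinal lt_l).
  rewrite /unbarred /letter_label !tnth_val /= !nth_index // lt_xn eqxx /= pair_bound //.
  lia.
apply/forallP => l; apply/implyP; rewrite /unbarred /letter_label !tnth_val.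
case/andP=> lt_xn /eqP def_l; rewrite lt_xn; set x := nth 0 s k in lt_xn def_l *.
have s_x : x \in s by rewrite mem_nth // size_s.
have s_cx : conj_pos n x \in s by rewrite -def_l mem_nth // size_s.
have := KN x lt_xn s_x s_cx; rewrite pair_bound // -def_l !index_uniq ?size_s //.
lia.
Qed.

Lemma wt_tuple n (v : n.-tuple 'I_(n.*2)) (i : 'I_n) : uniq (map val v) ->
  wt v i = (Posz (val i \in map val v) - Posz (conj_pos n i \in map val v))%R.
Proof. by move=> uniq_v; rewrite ffunE -!(count_map val (pred1 _)) !count_uniq_mem. Qed.

Section WeightClass.

Variables (n : nat) (v0 : n.-tuple 'I_(n.*2)).
Hypothesis v0_B : v0 \in B_Lambda n.

Local Notation s0 := (map val v0).
Local Notation single0 := [seq c == 1 | c <- columns n s0].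
Local Notation weight_class := [set v in B_Lambda n | wt v == wt v0].

(* A single column j is filled as in v0, any other one is full iff w says so. *)
Definition refill (w : seq nat) (t : nat) : bool :=
  let j := if t < n then t else conj_pos n t in
  if nth false single0 j then t \in s0 else nth 0 w j == 2.

Lemma nth_single0 j : j < n -> nth false single0 j = (column n s0 j == 1).
Proof. by move=> lt_jn; rewrite (nth_map 0) ?size_columns // nth_columns. Qed.

Lemma refill_pair w j : j < n ->
  refill w j = (if column n s0 j == 1 then j \in s0 else nth 0 w j == 2) /\
  refill w (conj_pos n j)
  = (if column n s0 j == 1 then conj_pos n j \in s0 else nth 0 w j == 2).
Proof.
move=> lt_jn; have lt_j2n : j < n.*2 by lia.
have ge_cj : conj_pos n j < n = false by apply/negbTE; rewrite /conj_pos; lia.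
by rewrite /refill lt_jn ge_cj conj_posK // nth_single0.
Qed.

Lemma weight_class_entries v j : v \in weight_class -> j < n ->
  (Posz (j \in map val v) - Posz (conj_pos n j \in map val v)
   = Posz (j \in s0) - Posz (conj_pos n j \in s0))%R.
Proof.
rewrite inE => /andP[v_B /eqP wt_v] lt_jn.
have := congr1 (fun mu : {ffun 'I_n -> int} => mu (Ordinal lt_jn)) wt_v.
by rewrite /= !wt_tuple ?uniq_B_Lambda.
Qed.

Lemma refill_columns v t : v \in weight_class -> t < n.*2 ->
  refill (columns n (map val v)) t = (t \in map val v).
Proof.
move=> v_class lt_t; rewrite /refill; set j := if t < n then t else conj_pos n t.
have lt_jn : j < n by rewrite /j; case: ifP => //; rewrite /conj_pos; lia.
have t_pair : (t == j) || (t == conj_pos n j).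
  by rewrite /j; case: ifP => _; rewrite ?eqxx ?conj_posK ?eqxx ?orbT.
rewrite nth_single0 // nth_columns // /column; have := weight_class_entries v_class lt_jn.
by case/orP: t_pair => /eqP->; do 4!case: (_ \in _).
Qed.

Lemma weight_class_columns_inj :
  {in weight_class &, injective (fun v : n.-tuple 'I_(n.*2) => columns n (map val v))}.
Proof.
move=> u v u_class v_class eq_col; apply/val_inj/(inj_map val_inj).
have [u_B v_B] : u \in B_Lambda n /\ v \in B_Lambda n.
  by move: u_class v_class; rewrite !inE => /andP[? _] /andP[].
apply: (irr_sorted_eq ltn_trans ltnn); rewrite ?sorted_B_Lambda // => t.
case: (ltnP t n.*2) => [lt_t | ge_t]; first by rewrite -!refill_columns // eq_col.
by apply/idP/idP => /(allP (all_val_lt _)); rewrite ltnNge ge_t.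
Qed.

Lemma weight_class_columns v : v \in weight_class ->
  columns n (map val v) \in fillings single0 /\ motzkin_path 0 (columns n (map val v)).
Proof.
move=> v_class; have v_B : v \in B_Lambda n by move: v_class; rewrite inE => /andP[].
split.
  suff <- : [seq c == 1 | c <- columns n (map val v)] = single0.
    exact/mem_fillings_self/columns_le2.
  rewrite -!map_comp; apply/eq_in_map => j; rewrite mem_iota /= /column => lt_jn.
  by have := weight_class_entries v_class lt_jn; do 4!case: (_ \in _).
apply/motzkin_pathP; split; first exact: columns_le2.
  rewrite size_columns => x lt_xn; rewrite nth_columns // /column add0n.
  case s_x: (x \in _); case s_cx: (_ \in _) => // _.
  by move/(B_LambdaP (sorted_B_Lambda v_B)): v_B; apply.
by rewrite sumn_columns ?uniq_B_Lambda ?all_val_lt // size_columns size_map size_tuple.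
Qed.

Lemma weight_class_columns_onto w : w \in fillings single0 -> motzkin_path 0 w ->
  exists2 v, v \in weight_class & columns n (map val v) = w.
Proof.
move=> /nth_fillings[size_w fits_w] /motzkin_pathP[_ bound_w sum_w].
rewrite size_map size_columns in size_w fits_w.
set s := filter (refill w) (iota 0 n.*2).
have mem_s t : (t \in s) = (t < n.*2) && refill w t by rewrite mem_filter mem_iota andbC.
have sorted_s : sorted ltn s := sorted_filter ltn_trans _ (iota_ltn_sorted 0 _).
have uniq_s : uniq s := sorted_uniq ltn_trans ltnn sorted_s.
have lt_s : all (fun t => t < n.*2) s by apply/allP => t; rewrite mem_s => /andP[].
have mem_pair j : j < n ->
    (j \in s) = refill w j /\ (conj_pos n j \in s) = refill w (conj_pos n j).
  move=> lt_jn; have lt_cj : conj_pos n j < n.*2 by rewrite /conj_pos; lia.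
  by rewrite !mem_s lt_cj (leq_trans lt_jn) // -addnn leq_addr.
have col_s : columns n s = w.
  apply: (@eq_from_nth _ 0); rewrite ?size_columns ?size_w // => j lt_jn.
  rewrite nth_columns // /column; have [-> ->] := mem_pair j lt_jn.
  have [-> ->] := refill_pair w lt_jn.
  have := fits_w j lt_jn; rewrite nth_single0 // /column.
  by do 2!case: (_ \in _); case: (nth 0 w j) => [|[|[|]]].
have [v val_v] : exists v : n.-tuple 'I_(n.*2), map val v = s.
  apply: tuple_of_filter_iota.
  by rewrite -size_filter -/s -(sumn_columns uniq_s lt_s) col_s sum_w size_w.
exists v; rewrite ?val_v // inE; apply/andP; split.
  apply/B_LambdaP; rewrite val_v // col_s => x lt_xn s_x s_cx.
  by apply: bound_w; rewrite ?size_w // -col_s nth_columns // /column s_x s_cx.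
apply/eqP/ffunP => i; rewrite !wt_tuple ?val_v ?uniq_B_Lambda //.
have [-> ->] := mem_pair i (ltn_ord i); have [-> ->] := refill_pair w (ltn_ord i).
by rewrite /column; case: eqP; do 2!case: (_ \in s0); case: (_ == 2).
Qed.

Lemma card_weight_class : #|weight_class| = count (motzkin_path 0) (fillings single0).
Proof.
rewrite cardE -(size_map (fun v : n.-tuple 'I_(n.*2) => columns n (map val v))).
rewrite -size_filter; apply/perm_size/uniq_perm.
- rewrite map_inj_in_uniq ?enum_uniq // => u v; rewrite !mem_enum.
  exact: weight_class_columns_inj.
- exact/filter_uniq/uniq_fillings.
move=> w; rewrite mem_filter; apply/mapP/andP => [[v] | [motzkin_w fill_w]].
  by rewrite mem_enum => /weight_class_columns[fill_v motzkin_v] ->.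
have [v v_class <-] := weight_class_columns_onto fill_w motzkin_w.
by exists v; rewrite ?mem_enum.
Qed.

End WeightClass.

Import GRing.Theory Num.Theory.

Theorem mainTheorem1 (n : nat) (mu : {ffun 'I_n -> int}) (m : nat) :
  (2 <= n)%N ->
  (0 < wt_mult mu)%N ->
  (forall v, v \in B_Lambda n -> wt v = mu -> singles v = m) ->
  (m < n)%N ->
  exists k : nat, (n - m = k.*2)%N /\
    ((wt_mult mu)%:R = ((k.+1)%:R)^-1 * ('C(k.*2, k))%:R :> rat)%R.
Proof.
move=> _ /card_gt0P[v0]; rewrite inE => /andP[v0_B /eqP wt_v0] singles_mu _.
have uniq_v0 := uniq_B_Lambda v0_B; have lt_v0 := all_val_lt v0.
have size_v0 : size (map val v0) = n by rewrite size_map size_tuple.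
have m_singles : count (pred1 1) (columns n (map val v0)) = m.
  by rewrite -(singles_mu v0) // /singles -singles_columns // count_map.
exists (count (pred1 2) (columns n (map val v0))); split.
  have := count_predC (pred1 1) (columns n (map val v0)).
  by rewrite size_columns m_singles count_nonsingle_columns //; lia.
rewrite /wt_mult -wt_v0 card_weight_class // count_motzkin_fillings count_map.
rewrite (@eq_count _ _ (predC (pred1 1))) // count_nonsingle_columns //.
by rewrite -dyck_paths_catalan natrM mulrC mulfK // pnatr_eq0.
Qed.
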